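(* For all integers $m\ge2$, $G_{m,m-1}(q)=2G_{m,m-2}(q)$ and $H_{m,m-1}(q)=2H_{m,m-2}(q)$.
   Context: $q$ is an indeterminate with square root $q^{1/2}$, $[k]=\frac{1-q^k}{1-q}$. Let $T_{m,n}(q)=\sum_{k=1}^n(-1)^{n-k}[k]^mq^{\frac m2(n-k)}$. The polynomials $G_{m,j},H_{m,j}\in\mathbb{Z}[q]$ ($m\ge1$, $0\le j\le m-1$) are those (shown to exist by Guo and Zeng, and uniquely determined) such that for all $n\ge1$: $T_{2m,n}(q)=\sum_{k=1}^m(-q^n)^{m-k}\frac{G_{m,m-k}(q)}{\prod_{i=0}^{m-k}(1+q^{m-i})}([n][n+1])^k$, and $T_{2m-1,n}(q)=(-1)^{m+n}H_{m,m-1}(q^{\frac12})\frac{q^{(m-\frac12)n}}{(1+q^{\frac12})^m\prod_{i=0}^{m-1}(1+q^{m-i-\frac12})}+\frac{1-q^{n+\frac12}}{1-q^{\frac12}}\sum_{k=1}^m(-q^n)^{m-k}\frac{H_{m,m-k}(q^{\frac12})([n][n+1])^{k-1}}{(1+q^{\frac12})^{m-k+1}\prod_{i=0}^{m-k}(1+q^{m-i-\frac12})}$. *)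

From HB Require Import structures.
From mathcomp Require Import all_boot all_order all_algebra fraction.
Set Implicit Arguments. Unset Strict Implicit. Unset Printing Implicit Defensive.
Import Order.TTheory GRing.Theory Num.Theory.
Local Open Scope ring_scope.

(* We work in the field K = Q(Z[s]) of rational functions in an indeterminate
   s, which plays the role of q^{1/2}; thus q = s^2. *)
Definition K := {fraction {poly int}}.
Definition s : K := FracField.tofrac ('X : {poly int}).
Definition q : K := s ^+ 2.

Definition qint (k : nat) : K := (1 - q ^+ k) / (1 - q).

(* T_{m,n}(q) = sum_{k=1}^n (-1)^{n-k} [k]^m q^{(m/2)(n-k)};
   note q^{(m/2)(n-k)} = s^{m(n-k)}. *)
Definition T (m n : nat) : K :=
  \sum_(1 <= k < n.+1) (-1) ^+ (n - k) * qint k ^+ m * s ^+ (m * (n - k)).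

(* p(q) for p in Z[q] : substitute q = s^2 *)
Definition evq (p : {poly int}) : K := FracField.tofrac (p \Po ('X ^+ 2)).
(* p(q^{1/2}) for p in Z[q] : substitute q = s *)
Definition evsq (p : {poly int}) : K := FracField.tofrac p.

Definition G_spec (G : nat -> nat -> {poly int}) : Prop :=
  forall m n : nat, (1 <= m)%N -> (1 <= n)%N ->
    T (2 * m) n =
    \sum_(1 <= k < m.+1)
       (- q ^+ n) ^+ (m - k) * evq (G m (m - k)%N)
       / (\prod_(0 <= i < (m - k).+1) (1 + q ^+ (m - i)))
       * (qint n * qint n.+1) ^+ k.

(* The defining identity of the H_{m,j} (Guo--Zeng), for all m, n >= 1;
   q^{m-i-1/2} = s^{2(m-i)-1}, q^{(m-1/2)n} = s^{(2m-1)n}. *)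
Definition H_spec (H : nat -> nat -> {poly int}) : Prop :=
  forall m n : nat, (1 <= m)%N -> (1 <= n)%N ->
    T (2 * m - 1) n =
    (-1) ^+ (m + n) * evsq (H m (m - 1)%N) * s ^+ ((2 * m - 1) * n)
      / ((1 + s) ^+ m * \prod_(0 <= i < m) (1 + s ^+ (2 * (m - i) - 1)))
    + (1 - s ^+ (2 * n + 1)) / (1 - s) *
      \sum_(1 <= k < m.+1)
        (- q ^+ n) ^+ (m - k) * evsq (H m (m - k)%N)
        * (qint n * qint n.+1) ^+ (k - 1)
        / ((1 + s) ^+ (m - k + 1)
           * \prod_(0 <= i < (m - k).+1) (1 + s ^+ (2 * (m - i) - 1))).

From HB Require Import structures.
From mathcomp Require Import all_boot all_order all_algebra fraction.
From mathcomp Require Import ring zify.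
Import GRing.Theory.
Local Open Scope ring_scope.

(* Summing the alternating geometric series gives
     T_{M,n} = P_M(q^n) - (-q^(M/2))^n P_M(1),   P_M = sum_j c_j X^j,
   with c_j proportional to (-1)^j C(M,j) w_j, where w_j = q^j / (q^(M/2) + q^j)
   satisfies w_j + w_(M-j) = 1.  For even n the Guo-Zeng identities thus become
   polynomial identities in x = q^n (for odd M, after splitting off the odd power
   of s^n), whose right-hand sides are expansions in powers of
   U(x) = (1-x)(1-qx)/(1-q)^2; this polynomial has U(q^n) = [n][n+1] and a simple
   zero at x = 1.  Apply the linear functional L p = ((θ-m)^2 p)(1) if M = 2m,
   resp. L p = ((2θ-M) p)(1) if M is odd, where θ = x d/dx.  Since
   C(M,j) (-1)^j L(x^j) is symmetric under j <-> M-j, pairing j with M-j shows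
   that L(P_M) is half of (1-q)^(-M) L((1-x)^M), which is 0 because L only sees
   the Taylor coefficients at x = 1 of order at most 2.  For the same reason only
   the two lowest powers of U survive on the right-hand side, and the resulting
   linear relation between their coefficients is G_(m,m-1) = 2 G_(m,m-2),
   resp. H_(m,m-1) = 2 H_(m,m-2). *)

Section PolyFacts.
Variable R : comNzRingType.
Implicit Types p r : {poly R}.

Lemma coef1M p r : (p * r)`_1 = p`_0 * r`_1 + p`_1 * r`_0.
Proof. by rewrite coefM !big_ord_recr big_ord0 /= add0r. Qed.

Lemma coef_XaddC1n j i : (('X + 1) ^+ j : {poly R})`_i = 'C(j, i)%:R.
Proof.
elim: j i => [|j IHj] [|i]; rewrite ?expr0 ?coef1 ?bin0n //.
  by rewrite exprSr mulrDr mulr1 coefD coefMX add0r IHj !bin0.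
by rewrite exprSr mulrDr mulr1 coefD coefMX !IHj binS natrD addrC.
Qed.

Lemma coef_NXaddC1n j i : ((- ('X + 1)) ^+ j : {poly R})`_i = (-1) ^+ j * 'C(j, i)%:R.
Proof.
rewrite (exprNn ('X + 1)).
have -> : ((-1) ^+ j : {poly R}) = ((-1) ^+ j)%:P by rewrite rmorph_sign.
by rewrite coefCM coef_XaddC1n.
Qed.

Lemma coef_comp_XaddC1_Xn j i : ('X ^+ j \Po ('X + 1) : {poly R})`_i = 'C(j, i)%:R.
Proof. by rewrite comp_Xn_poly coef_XaddC1n. Qed.

Lemma comp_XaddC1_1subXn M : ((1 - 'X) ^+ M \Po ('X + 1) : {poly R}) = (-1) ^+ M *: 'X ^+ M.
Proof.
rewrite rmorphXn rmorphB /= rmorph1 comp_polyX opprD addrCA subrr addr0.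
by rewrite (exprNn 'X) -mul_polyC rmorph_sign.
Qed.

Lemma poly_eq0_of_inj_roots (S : idomainType) (p : {poly S}) (z : nat -> S) :
  injective z -> (forall t, p.[z t] = 0) -> p = 0.
Proof.
move=> z_inj pz0; apply/eqP; apply: contraT => p_neq0.
have := max_poly_roots p_neq0 (rs := map z (iota 0 (size p))).
rewrite size_map size_iota ltnn map_inj_uniq ?iota_uniq //; apply => //.
by apply/allP => _ /mapP [t _ ->]; apply/eqP; rewrite pz0.
Qed.

End PolyFacts.

Lemma sum_sym_mul_compl {R : pzSemiRingType} {N : nat} {a g : nat -> R} :
  (forall j, (j <= N)%N -> a (N - j)%N = a j) ->
  (forall j, (j <= N)%N -> g j + g (N - j)%N = 1) ->
  (\sum_(j < N.+1) a j * g j) *+ 2 = \sum_(j < N.+1) a j.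
Proof.
move=> a_sym g_compl.
have sum_rev : \sum_(j < N.+1) a j * g j = \sum_(j < N.+1) a j * g (N - j)%N.
  rewrite (reindex_inj rev_ord_inj) /=; apply: eq_bigr => j _.
  by rewrite subSS a_sym // -ltnS.
rewrite mulr2n {2}sum_rev -big_split /=; apply: eq_bigr => j _.
by rewrite -mulrDr g_compl ?mulr1 // -ltnS.
Qed.

Lemma sign_subn {R : pzRingType} (M j : nat) :
  (j <= M)%N -> (-1) ^+ (M - j) = (-1) ^+ M * (-1) ^+ j :> R.
Proof. by move=> le_jM; rewrite -signr_odd oddB // signr_addb !signr_odd. Qed.

Lemma sign_even {R : pzRingType} (k : nat) : (-1) ^+ (2 * k) = 1 :> R.
Proof. by rewrite exprM sqrrN !expr1n. Qed.

Lemma comp_polyX2_eqZXn_odd {R : nzRingType} {A : {poly R}} {c : R} {M : nat} :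
  odd M -> A \Po 'X^2 = c *: 'X^M -> A = 0.
Proof.
move=> M_odd AX2; apply/polyP => i; have := congr1 (fun r : {poly R} => r`_(2 * i)) AX2.
rewrite /= coef_comp_poly_Xn // dvdn_mulr // mulKn // coefZ coefXn coef0.
by case: eqP M_odd => [<-|_ _]; rewrite ?oddM ?mulr0.
Qed.

Section EulerFunctionals.
Context {R : comNzRingType}.
Implicit Types (p r : {poly R}) (m M : nat).

(* [euler2 m p] is ((θ - m)^2 p)(1) and [euler1 M p] is ((2θ - M) p)(1), with
   θ = X d/dX, written with the Taylor coefficients of p at 1. *)
Definition euler2 m p : R :=
  let p1 := p \Po ('X + 1) in m%:R ^+ 2 * p1`_0 + (1 - (2 * m)%:R) * p1`_1 + 2%:R * p1`_2.

Definition euler1 M p : R :=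
  let p1 := p \Po ('X + 1) in 2%:R * p1`_1 - M%:R * p1`_0.

Fact euler2_is_linear m : linear_for *%R (euler2 m).
Proof. by move=> a p r; rewrite /euler2 linearP /= !coefD !coefZ; ring. Qed.

HB.instance Definition _ m :=
  GRing.isLinear.Build R {poly R} R *%R (euler2 m) (euler2_is_linear m).

Fact euler1_is_linear M : linear_for *%R (euler1 M).
Proof. by move=> a p r; rewrite /euler1 linearP /= !coefD !coefZ; ring. Qed.

HB.instance Definition _ M :=
  GRing.isLinear.Build R {poly R} R *%R (euler1 M) (euler1_is_linear M).

Lemma euler2_Xn m j : euler2 m 'X^j = (j%:R - m%:R) ^+ 2.
Proof.
have bin2_2 : 2%:R * 'C(j, 2)%:R = j%:R * (j%:R - 1) :> R.
  rewrite -natrM mulnC bin_ffact ffactnS ffactn1 natrM.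
  by case: j => [|j]; rewrite ?mul0r // mulrSr addrK.
rewrite /euler2 !coef_comp_XaddC1_Xn bin0 bin1 bin2_2 natrM; ring.
Qed.

Lemma euler1_Xn M j : euler1 M 'X^j = 2%:R * j%:R - M%:R.
Proof. by rewrite /euler1 !coef_comp_XaddC1_Xn bin0 bin1 mulr1. Qed.

Lemma euler2_Xn_sym m j : (j <= 2 * m)%N ->
  'C(2 * m, 2 * m - j)%:R * (-1) ^+ (2 * m - j) * euler2 m 'X^(2 * m - j) =
  'C(2 * m, j)%:R * (-1) ^+ j * euler2 m 'X^j.
Proof.
move=> le_j2m; rewrite bin_sub // sign_subn // sign_even mul1r !euler2_Xn.
by rewrite natrB // natrM; congr (_ * _); ring.
Qed.

Lemma euler1_Xn_sym M j : odd M -> (j <= M)%N ->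
  'C(M, M - j)%:R * (-1) ^+ (M - j) * euler1 M 'X^(M - j) =
  'C(M, j)%:R * (-1) ^+ j * euler1 M 'X^j.
Proof.
move=> M_odd le_jM; rewrite bin_sub // sign_subn // -signr_odd M_odd !euler1_Xn natrB //.
by ring.
Qed.

Lemma euler2_eq0 m p r k : (3 <= k)%N -> p \Po ('X + 1) = 'X^k * r -> euler2 m p = 0.
Proof.
by move=> k_ge3 p1E; rewrite /euler2 p1E !coefXnM !(leq_trans _ k_ge3) // !mulr0 !addr0.
Qed.

Lemma euler1_eq0 M p r k : (2 <= k)%N -> p \Po ('X + 1) = 'X^k * r -> euler1 M p = 0.
Proof.
by move=> k_ge2 p1E; rewrite /euler1 p1E !coefXnM !(leq_trans _ k_ge2) // !mulr0 subrr.
Qed.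

Lemma euler2_1subXn m M : (3 <= M)%N -> euler2 m ((1 - 'X) ^+ M) = 0.
Proof.
by move=> M_ge3; apply: (euler2_eq0 _ _ _ _ M_ge3); rewrite comp_XaddC1_1subXn -mul_polyC mulrC.
Qed.

Lemma euler1_1subXn M : (2 <= M)%N -> euler1 M ((1 - 'X) ^+ M) = 0.
Proof.
by move=> M_ge2; apply: (euler1_eq0 _ _ _ _ M_ge2); rewrite comp_XaddC1_1subXn -mul_polyC mulrC.
Qed.

Lemma euler2_mul_shiftX {m : nat} {U V S : {poly R}} : U \Po ('X + 1) = 'X * V ->
  euler2 m (U * S) =
  (1 - (2 * m)%:R) * (V`_0 * (S \Po ('X + 1))`_0)
  + 2%:R * (V`_0 * (S \Po ('X + 1))`_1 + V`_1 * (S \Po ('X + 1))`_0).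
Proof.
move=> U_shift; rewrite /euler2 comp_polyM U_shift -(mulrA 'X V) !coefXM /=.
by rewrite coef0M coef1M mulr0 add0r.
Qed.

Lemma euler1_mul M (P S : {poly R}) :
  euler1 M (P * S) =
  2%:R * ((P \Po ('X + 1))`_0 * (S \Po ('X + 1))`_1
           + (P \Po ('X + 1))`_1 * (S \Po ('X + 1))`_0)
  - M%:R * ((P \Po ('X + 1))`_0 * (S \Po ('X + 1))`_0).
Proof. by rewrite /euler1 comp_polyM coef1M coef0M. Qed.

End EulerFunctionals.

Section UExpansion.
Context {R : comNzRingType} (U V : {poly R}).
Hypothesis U_shift : U \Po ('X + 1) = 'X * V.

(* With U = Upoly q, the sums over k in G_spec and H_spec are values at X = q^n
   of [U * Uexpansion c m] and [Uexpansion c m] respectively. *)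
Definition Uexpansion (c : nat -> R) (m : nat) : {poly R} :=
  \sum_(1 <= k < m.+1) (- 'X) ^+ (m - k) * (c k)%:P * U ^+ (k - 1).

Lemma comp_XaddC1_Uterm a k (c : R) :
  ((- 'X) ^+ a * c%:P * U ^+ k) \Po ('X + 1) = 'X^k * ((- ('X + 1)) ^+ a * c%:P * V ^+ k).
Proof.
rewrite !comp_polyM rmorphXn rmorphN /= comp_polyX comp_polyC rmorphXn /= U_shift.
by rewrite exprMn mulrCA.
Qed.

Lemma coef_Uexpansion_shift_low c m i : (i < 2)%N ->
  (Uexpansion c m.+2 \Po ('X + 1))`_i =
  ((- ('X + 1)) ^+ m.+1 * (c 1%N)%:P + 'X * ((- ('X + 1)) ^+ m * (c 2%N)%:P * V))`_i.
Proof.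
move=> i_lt2; rewrite /Uexpansion linear_sum /= coef_sum big_ltn // big_ltn // big1_seq ?addr0.
  by rewrite !comp_XaddC1_Uterm !subn1 !subSS subn0 expr0 mul1r expr1 mulr1 coefD.
move=> k /andP [_]; rewrite mem_index_iota => /andP [k_gt2 _].
by rewrite comp_XaddC1_Uterm coefXnM ifT //; lia.
Qed.

Lemma coef0_Uexpansion_shift c m : (Uexpansion c m.+2 \Po ('X + 1))`_0 = (-1) ^+ m.+1 * c 1%N.
Proof.
by rewrite coef_Uexpansion_shift_low // coefD coefXM /= addr0 coefMC coef_NXaddC1n bin0 mulr1.
Qed.

Lemma coef1_Uexpansion_shift c m :
  (Uexpansion c m.+2 \Po ('X + 1))`_1 = (-1) ^+ m.+1 * (m.+1%:R * c 1%N - c 2%N * V`_0).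
Proof.
rewrite coef_Uexpansion_shift_low // coefD coefXM /= coefMC !coef0M coefC /=.
by rewrite !coef_NXaddC1n bin1 bin0 exprS; ring.
Qed.

Lemma horner_Uexpansion c m x :
  (Uexpansion c m).[x] = \sum_(1 <= k < m.+1) (- x) ^+ (m - k) * c k * U.[x] ^+ (k - 1).
Proof. by rewrite horner_sum; apply: eq_bigr => k _; rewrite !hornerE. Qed.

Lemma horner_mul_Uexpansion c m x :
  (U * Uexpansion c m).[x] = \sum_(1 <= k < m.+1) (- x) ^+ (m - k) * c k * U.[x] ^+ k.
Proof.
rewrite hornerM horner_Uexpansion big_distrr /=; apply: eq_big_nat => -[|k] //= _.
by rewrite subn1 /= exprS; ring.
Qed.

End UExpansion.

Lemma s_exp_inj : injective (fun n => s ^+ n).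
Proof.
move=> a b /eqP; rewrite /= /s -!tofracXn tofrac_eq => /eqP XaXb.
by have := congr1 (fun p : {poly int} => size p) XaXb; rewrite /= !size_polyXn => -[].
Qed.

Lemma q_exp_inj : injective (fun n => q ^+ n).
Proof. by move=> a b /=; rewrite /q -!exprM => /s_exp_inj /eqP; rewrite eqn_mul2l => /eqP. Qed.

Lemma s_expB_neq0 a b : a != b -> s ^+ a - s ^+ b != 0.
Proof. by apply: contraNneq => /eqP; rewrite subr_eq0 => /eqP /s_exp_inj ->. Qed.

Lemma s_expD_neq0 a b : s ^+ a + s ^+ b != 0.
Proof.
rewrite /s -!tofracXn -tofracD tofrac_eq0; apply/eqP => /(congr1 (horner^~ 1)).
by rewrite !hornerE !expr1n.
Qed.

Lemma subq1_neq0 : 1 - q != 0.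
Proof. by rewrite -(expr0 s) s_expB_neq0. Qed.

Lemma subs1_neq0 : 1 - s != 0.
Proof. by rewrite -(expr0 s) -{2}(expr1 s) s_expB_neq0. Qed.

Lemma adds1_exp_neq0 k : 1 + s ^+ k != 0.
Proof. by rewrite -(expr0 s) s_expD_neq0. Qed.

Lemma adds1_neq0 : 1 + s != 0.
Proof. by rewrite -[s]expr1 adds1_exp_neq0. Qed.

Lemma addq1_exp_neq0 k : 1 + q ^+ k != 0.
Proof. by rewrite /q -exprM adds1_exp_neq0. Qed.

Lemma two_neq0 : 2%:R != 0 :> K.
Proof. by have := s_expD_neq0 0 0; rewrite expr0. Qed.

Lemma evq_mul2_inj (p r : {poly int}) : evq p = 2%:R * evq r -> p = 2%:R * r.
Proof.
have -> : 2%:R * evq r = evq (2%:R * r) by rewrite /evq !mulr_natl !raddfMn.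
rewrite /evq => /eqP; rewrite tofrac_eq => /eqP pr; apply/polyP => i.
have := congr1 (fun p : {poly int} => p`_(2 * i)) pr.
by rewrite /= !coef_comp_poly_Xn // dvdn_mulr // mulKn.
Qed.

Lemma evsq_mul2_inj (p r : {poly int}) : evsq p = 2%:R * evsq r -> p = 2%:R * r.
Proof.
have -> : 2%:R * evsq r = evsq (2%:R * r) by rewrite /evsq !mulr_natl raddfMn.
by rewrite /evsq => /eqP; rewrite tofrac_eq => /eqP.
Qed.

Definition Tweight (M j : nat) : K := q ^+ j / (s ^+ M + q ^+ j).

Definition Tcoef (M j : nat) : K :=
  ((1 - q) ^+ M)^-1 * 'C(M, j)%:R * (-1) ^+ j * Tweight M j.

Definition Tpoly (M : nat) : {poly K} := \sum_(j < M.+1) Tcoef M j *: 'X^j.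

Definition Tconst (M : nat) : K := \sum_(j < M.+1) Tcoef M j.

Lemma addsq_exp_neq0 M j : s ^+ M + q ^+ j != 0.
Proof. by rewrite /q -exprM s_expD_neq0. Qed.

Lemma Tweight_compl M j : (j <= M)%N -> Tweight M j + Tweight M (M - j) = 1.
Proof.
move=> le_jM; rewrite /Tweight addf_div ?addsq_exp_neq0 //.
set u := q ^+ j; set v := q ^+ (M - j); set w := s ^+ M.
have uvw : u * v = w * w by rewrite -!exprD subnKC // /q -exprM addnn -mul2n.
have -> : u * (w + v) + v * (w + u) = (w + u) * (w + v) + (u * v - w * w) by ring.
by rewrite uvw subrr addr0 divff // mulf_neq0 ?addsq_exp_neq0.
Qed.

Lemma horner_Tpoly M x : (Tpoly M).[x] = \sum_(j < M.+1) Tcoef M j * x ^+ j.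
Proof. by rewrite horner_sum; apply: eq_bigr => j _; rewrite hornerZ hornerXn. Qed.

Lemma qint_expE M k :
  qint k ^+ M = ((1 - q) ^+ M)^-1 * \sum_(j < M.+1) 'C(M, j)%:R * (-1) ^+ j * (q ^+ j) ^+ k.
Proof.
rewrite /qint expr_div_n mulrC; congr (_ * _); rewrite addrC exprD1n; apply: eq_bigr => j _.
by rewrite -mulrA mulr_natl (exprNn (q ^+ k)) exprAC.
Qed.

Lemma Tcoef_mulD M j :
  Tcoef M j * (s ^+ M + q ^+ j) = ((1 - q) ^+ M)^-1 * 'C(M, j)%:R * (-1) ^+ j * q ^+ j.
Proof. by rewrite /Tcoef /Tweight -!mulrA mulVf ?mulr1 ?addsq_exp_neq0. Qed.

Lemma qint_exp_Tcoef M n :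
  qint n.+1 ^+ M = \sum_(j < M.+1) Tcoef M j * (s ^+ M + q ^+ j) * (q ^+ j) ^+ n.
Proof.
rewrite qint_expE big_distrr /=; apply: eq_bigr => j _.
by rewrite Tcoef_mulD exprS !mulrA.
Qed.

Lemma T_recS M n : T M n.+1 = - s ^+ M * T M n + qint n.+1 ^+ M.
Proof.
rewrite /T big_nat_recr //= subnn muln0 !expr0 mulr1 mul1r; congr (_ + _).
rewrite big_distrr /=; apply: eq_big_nat => k /andP [_ le_kn].
by rewrite subSn // exprS mulnS exprD; ring.
Qed.

Lemma T_closed M n : T M n = (Tpoly M).[q ^+ n] - (- s ^+ M) ^+ n * Tconst M.
Proof.
rewrite horner_Tpoly /Tconst big_distrr -sumrB /=.
elim: n => [|n IHn].
  by rewrite /T big_geq // big1 // => j _; rewrite !expr0 expr1n mulr1 mul1r subrr.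
rewrite T_recS IHn qint_exp_Tcoef big_distrr -big_split /=; apply: eq_bigr => j _.
by rewrite !(exprAC q _ j) !exprS; ring.
Qed.

Lemma Tpoly_annihilated (L : {scalar {poly K}}) M :
  (forall j, (j <= M)%N -> 'C(M, M - j)%:R * (-1) ^+ (M - j) * L 'X^(M - j) =
                          'C(M, j)%:R * (-1) ^+ j * L 'X^j) ->
  L ((1 - 'X) ^+ M) = 0 -> L (Tpoly M) = 0.
Proof.
pose a j := 'C(M, j)%:R * (-1) ^+ j * L 'X^j.
move=> a_sym L_1subXn.
have sum_a : \sum_(j < M.+1) a j = 0.
  apply: etrans L_1subXn; rewrite (addrC 1) exprD1n linear_sum; apply: eq_bigr => j _.
  have -> : (- 'X) ^+ j = (-1) ^+ j *: 'X^j :> {poly K}.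
    by rewrite (exprNn 'X) -mul_polyC rmorph_sign.
  by rewrite scalerMnl scalarZ -mulr_natl.
have sum_aw : \sum_(j < M.+1) a j * Tweight M j = 0.
  have := sum_sym_mul_compl a_sym (@Tweight_compl M).
  by rewrite sum_a -mulr_natl => /eqP; rewrite mulf_eq0 (negbTE two_neq0) => /eqP.
rewrite linear_sum (eq_bigr (fun j : 'I_M.+1 => ((1 - q) ^+ M)^-1 * (a j * Tweight M j))).
  by rewrite -big_distrr /= sum_aw mulr0.
by move=> j _; rewrite scalarZ /Tcoef /a; ring.
Qed.

Section QuadraticU.
Context {F : fieldType} (x : F).

Definition Upoly : {poly F} := ((1 - x) ^- 2)%:P * ((1 - 'X) * (1 - x%:P * 'X)).

Definition Vpoly : {poly F} := ((1 - x) ^- 2)%:P * (x%:P * 'X + x%:P - 1).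

Lemma Upoly_shift : Upoly \Po ('X + 1) = 'X * Vpoly.
Proof.
rewrite /Upoly /Vpoly !(comp_polyM, comp_polyB, comp_polyC, comp_polyX) rmorph1.
by move: ((1 - x) ^- 2)%:P => c; ring.
Qed.

Lemma horner_Upoly y : Upoly.[y] = (1 - y) / (1 - x) * ((1 - x * y) / (1 - x)).
Proof.
rewrite /Upoly !hornerE /= expr2 invfM.
by move: (1 - x)^-1 => c; ring.
Qed.

Lemma Vpoly_coef0 : Vpoly`_0 = (x - 1) / (1 - x) ^+ 2.
Proof. by rewrite /Vpoly coefCM !coefB coefD coefCM coefX !coefC /= mulr0 add0r mulrC. Qed.

Lemma Vpoly_coef1 : Vpoly`_1 = x / (1 - x) ^+ 2.
Proof. by rewrite /Vpoly coefCM !coefB coefD coefCM coefX !coefC /= mulr1 subr0 addr0 mulrC. Qed.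

Lemma euler2_Upoly_Uexpansion c m : 1 - x != 0 ->
  euler2 m.+2 (Upoly * Uexpansion Upoly c m.+2) =
  (-1) ^+ m.+1 / (1 - x) ^+ 2 * ((1 + x) * c 1%N - 2%:R * c 2%N).
Proof.
move=> x_neq1; rewrite (euler2_mul_shiftX Upoly_shift).
rewrite (coef0_Uexpansion_shift _ _ Upoly_shift) (coef1_Uexpansion_shift _ _ Upoly_shift).
by rewrite Vpoly_coef0 Vpoly_coef1; field.
Qed.

End QuadraticU.

Lemma horner_Upoly_qexp n : (Upoly q).[q ^+ n] = qint n * qint n.+1.
Proof. by rewrite horner_Upoly /qint exprS. Qed.

Section OddPrefactor.
Context {F : fieldType} (y : F).

Definition Hprefactor : {poly F} := ((1 - y)^-1)%:P * (1 - y%:P * 'X).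

Lemma Hprefactor_shift_coef0 : 1 - y != 0 -> (Hprefactor \Po ('X + 1))`_0 = 1.
Proof.
move=> y_neq1; rewrite /Hprefactor !(comp_polyM, comp_polyB, comp_polyC, comp_polyX) rmorph1.
by rewrite coefCM coefB coef1 coefCM coefD coefX coefC /= add0r mulr1 mulVf.
Qed.

Lemma Hprefactor_shift_coef1 : (Hprefactor \Po ('X + 1))`_1 = - (y / (1 - y)).
Proof.
rewrite /Hprefactor !(comp_polyM, comp_polyB, comp_polyC, comp_polyX) rmorph1.
by rewrite coefCM coefB coef1 coefCM coefD coefX coefC /= addr0 mulr1 sub0r mulrN mulrC.
Qed.

Lemma euler1_Hprefactor_Uexpansion c m : 1 - y != 0 -> 1 + y != 0 ->
  euler1 (2 * m.+2 - 1) (Hprefactor * Uexpansion (Upoly (y ^+ 2)) c m.+2) =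
  (-1) ^+ m / ((1 - y) * (1 + y)) * ((1 + y) ^+ 2 * c 1%N - 2%:R * c 2%N).
Proof.
move=> y_neq1 y_neqN1; have U_shift := Upoly_shift (y ^+ 2).
have y2_neq1 : 1 - y ^+ 2 != 0 by rewrite -(expr1n F 2) subr_sqr mulf_neq0.
rewrite euler1_mul Hprefactor_shift_coef0 // Hprefactor_shift_coef1.
rewrite (coef0_Uexpansion_shift _ _ U_shift) (coef1_Uexpansion_shift _ _ U_shift) Vpoly_coef0.
have -> : (2 * m.+2 - 1 = 2 * m + 3)%N by lia.
by rewrite exprS; field; rewrite y_neq1 y_neqN1 y2_neq1.
Qed.

End OddPrefactor.

Lemma horner_Hprefactor n : (Hprefactor s).[q ^+ n] = (1 - s ^+ (2 * n + 1)) / (1 - s).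
Proof. by rewrite /Hprefactor !hornerE mulrC addn1 exprS /q -exprM. Qed.

Definition Gcoef (G : nat -> nat -> {poly int}) (m k : nat) : K :=
  evq (G m (m - k)%N) / \prod_(0 <= i < (m - k).+1) (1 + q ^+ (m - i)).

Lemma Tpoly_even_at G m t : G_spec G -> (1 <= m)%N ->
  (Tpoly (2 * m)).[q ^+ (2 * t.+1)] - Tconst (2 * m) * (q ^+ (2 * t.+1)) ^+ m =
  (Upoly q * Uexpansion (Upoly q) (Gcoef G m) m).[q ^+ (2 * t.+1)].
Proof.
move=> G_T m_ge1; have := G_T m (2 * t.+1)%N m_ge1 isT.
have pow_n : (- s ^+ (2 * m)) ^+ (2 * t.+1) = (q ^+ (2 * t.+1)) ^+ m.
  by rewrite exprNn sign_even mul1r /q -!exprM; congr (_ ^+ _); nia.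
rewrite T_closed pow_n (mulrC (Tconst _)) => ->.
rewrite horner_mul_Uexpansion horner_Upoly_qexp; apply: eq_bigr => k _.
by rewrite /Gcoef -!mulrA.
Qed.

Lemma Tpoly_even_eq G m : G_spec G -> (1 <= m)%N ->
  Tpoly (2 * m) - Tconst (2 * m) *: 'X^m = Upoly q * Uexpansion (Upoly q) (Gcoef G m) m.
Proof.
move=> G_T m_ge1; apply/eqP; rewrite -subr_eq0; apply/eqP.
apply: (@poly_eq0_of_inj_roots _ _ (fun t => q ^+ (2 * t.+1))) => [a b|t].
  by move/q_exp_inj/eqP; rewrite eqn_mul2l => /eqP [].
by rewrite !(hornerD, hornerN, hornerZ) hornerXn (Tpoly_even_at G m t G_T m_ge1) subrr.
Qed.

Definition Hcoef (H : nat -> nat -> {poly int}) (m k : nat) : K :=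
  evsq (H m (m - k)%N) /
  ((1 + s) ^+ (m - k + 1) * \prod_(0 <= i < (m - k).+1) (1 + s ^+ (2 * (m - i) - 1))).

Definition Hlead (H : nat -> nat -> {poly int}) (m : nat) : K :=
  (-1) ^+ m * evsq (H m (m - 1)%N) /
  ((1 + s) ^+ m * \prod_(0 <= i < m) (1 + s ^+ (2 * (m - i) - 1))).

Lemma Tpoly_odd_at H m t : H_spec H -> (1 <= m)%N ->
  (Tpoly (2 * m - 1)).[q ^+ (2 * t.+1)]
  - (Hprefactor s * Uexpansion (Upoly q) (Hcoef H m) m).[q ^+ (2 * t.+1)] =
  (Tconst (2 * m - 1) + Hlead H m) * (s ^+ (2 * t.+1)) ^+ (2 * m - 1).
Proof.
move=> H_T m_ge1; have := H_T m (2 * t.+1)%N m_ge1 isT.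
have pow_n : (- s ^+ (2 * m - 1)) ^+ (2 * t.+1) = (s ^+ (2 * t.+1)) ^+ (2 * m - 1).
  by rewrite exprNn sign_even mul1r -!exprM; congr (_ ^+ _); nia.
have pow_Mn : s ^+ ((2 * m - 1) * (2 * t.+1)) = (s ^+ (2 * t.+1)) ^+ (2 * m - 1).
  by rewrite -exprM mulnC.
rewrite T_closed pow_n exprD sign_even mulr1 pow_Mn => T_eq.
rewrite hornerM horner_Uexpansion horner_Hprefactor horner_Upoly_qexp /Hcoef.
under eq_bigr do rewrite mulrA mulrAC.
rewrite -[(Tpoly _).[_]](subrK (s ^+ (2 * t.+1) ^+ (2 * m - 1) * Tconst (2 * m - 1))).
by rewrite T_eq /Hlead; ring.
Qed.

Lemma Tpoly_odd_eq H m : H_spec H -> (1 <= m)%N ->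
  Tpoly (2 * m - 1) = Hprefactor s * Uexpansion (Upoly q) (Hcoef H m) m.
Proof.
move=> H_T m_ge1; apply/eqP; rewrite -subr_eq0; apply/eqP.
have M_odd : odd (2 * m - 1) by rewrite oddB ?oddM //; lia.
(* The term of H_spec with the half-integral power q^((m-1/2)n) is an odd power
   of s^n; it splits off from the part that is a polynomial in s^(2n) = q^n. *)
apply: (comp_polyX2_eqZXn_odd (c := Tconst (2 * m - 1) + Hlead H m) M_odd).
apply/eqP; rewrite -subr_eq0; apply/eqP.
apply: (@poly_eq0_of_inj_roots _ _ (fun t => s ^+ (2 * t.+1))) => [a b|t].
  by move/s_exp_inj/eqP; rewrite eqn_mul2l => /eqP [].
have sq_s : (s ^+ (2 * t.+1)) ^+ 2 = q ^+ (2 * t.+1) by rewrite /q -!exprM mulnC.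
rewrite hornerD hornerN hornerZ hornerXn horner_comp hornerXn sq_s hornerD hornerN.
by rewrite (Tpoly_odd_at H m t H_T m_ge1) subrr.
Qed.

Lemma Gcoef1_mulD G p :
  (1 + q) * Gcoef G p.+2 1 = evq (G p.+2 p.+1) / \prod_(0 <= i < p.+1) (1 + q ^+ (p.+2 - i)).
Proof.
rewrite /Gcoef subn1 /= big_nat_recr //= subSnn expr1 mulrC invfM mulrA divfK //.
by rewrite -[q]expr1 addq1_exp_neq0.
Qed.

Lemma Gcoef2E G p :
  Gcoef G p.+2 2 = evq (G p.+2 p) / \prod_(0 <= i < p.+1) (1 + q ^+ (p.+2 - i)).
Proof. by rewrite /Gcoef subSS subSS subn0. Qed.

Lemma G_recurrence G p : G_spec G -> G p.+2 p.+1 = 2%:R * G p.+2 p.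
Proof.
move=> G_T; apply: evq_mul2_inj.
have P_neq0 : \prod_(0 <= i < p.+1) (1 + q ^+ (p.+2 - i)) != 0.
  by rewrite prodf_seq_neq0; apply/allP => i _; rewrite addq1_exp_neq0.
have : euler2 p.+2 (Upoly q * Uexpansion (Upoly q) (Gcoef G p.+2) p.+2) = 0.
  rewrite -(Tpoly_even_eq _ _ G_T) // raddfB /= scalarZ /= euler2_Xn subrr expr0n mulr0 subr0.
  apply: Tpoly_annihilated => [j|]; first exact: euler2_Xn_sym.
  by apply: euler2_1subXn; lia.
rewrite euler2_Upoly_Uexpansion ?subq1_neq0 // => /eqP.
rewrite mulf_eq0 mulf_eq0 signr_eq0 invr_eq0 expf_eq0 (negbTE subq1_neq0) andbF /=.
rewrite subr_eq0 Gcoef1_mulD Gcoef2E mulrA => /eqP.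
by move/(mulIf (invr_neq0 P_neq0)).
Qed.

Lemma Hcoef1_mulD H p :
  (1 + s) ^+ 2 * Hcoef H p.+2 1 =
  evsq (H p.+2 p.+1) /
  ((1 + s) ^+ p.+1 * \prod_(0 <= i < p.+1) (1 + s ^+ (2 * (p.+2 - i) - 1))).
Proof.
rewrite /Hcoef subn1 addn1 /= big_nat_recr //= subSnn.
set P := \prod_(0 <= i < p.+1) _.
have -> : (1 + s) ^+ p.+2 * (P * (1 + s ^+ (2 * 1 - 1))) = (1 + s) ^+ 2 * ((1 + s) ^+ p.+1 * P).
  by rewrite muln1 subn1 expr1 !exprS; ring.
by rewrite invfM mulrCA mulVKf // expf_neq0 // adds1_neq0.
Qed.

Lemma Hcoef2E H p :
  Hcoef H p.+2 2 =
  evsq (H p.+2 p) /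
  ((1 + s) ^+ p.+1 * \prod_(0 <= i < p.+1) (1 + s ^+ (2 * (p.+2 - i) - 1))).
Proof. by rewrite /Hcoef subSS subSS subn0 addn1. Qed.

Lemma H_recurrence H p : H_spec H -> H p.+2 p.+1 = 2%:R * H p.+2 p.
Proof.
move=> H_T; apply: evsq_mul2_inj.
have D_neq0 : (1 + s) ^+ p.+1 * \prod_(0 <= i < p.+1) (1 + s ^+ (2 * (p.+2 - i) - 1)) != 0.
  apply: mulf_neq0; first exact: expf_neq0 adds1_neq0.
  by rewrite prodf_seq_neq0; apply/allP => i _; rewrite adds1_exp_neq0.
have : euler1 (2 * p.+2 - 1) (Hprefactor s * Uexpansion (Upoly q) (Hcoef H p.+2) p.+2) = 0.
  rewrite -(Tpoly_odd_eq _ _ H_T) //.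
  have M_odd : odd (2 * p.+2 - 1) by rewrite oddB ?oddM //; lia.
  apply: Tpoly_annihilated => [j|]; first exact: euler1_Xn_sym.
  by apply: euler1_1subXn; lia.
have := euler1_Hprefactor_Uexpansion s (Hcoef H p.+2) p subs1_neq0 adds1_neq0.
rewrite -/q => -> /eqP.
rewrite mulf_eq0 mulf_eq0 signr_eq0 invr_eq0 mulf_eq0 (negbTE subs1_neq0) (negbTE adds1_neq0) /=.
rewrite subr_eq0 Hcoef1_mulD Hcoef2E mulrA => /eqP.
by move/(mulIf (invr_neq0 D_neq0)).
Qed.

Theorem corollary3p9 (G H : nat -> nat -> {poly int}) :
  G_spec G -> H_spec H ->
  forall m : nat, (2 <= m)%N ->
    G m (m - 1)%N = 2%:R * G m (m - 2)%N /\
    H m (m - 1)%N = 2%:R * H m (m - 2)%N.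
Proof.
move=> G_T H_T [|[|p]] // _; rewrite subn1 subSS subSS subn0 /=.
by split; [exact: G_recurrence | exact: H_recurrence].
Qed.
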